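(* Consider the following hybrid sealed-bid auction for a single item. There are $n_A$ ''integrated'' bidders and $n > 1$ ''non-integrated'' bidders, each bidder having a private value drawn independently from the uniform distribution on $[0,1]$. All bidders simultaneously submit bids and the highest bidder wins. If the winner is integrated, it pays the second-highest bid; if the winner is non-integrated, it pays its own bid. Suppose every integrated bidder bids its true value, and let $\sigma_n(\cdot)$ be a strictly increasing symmetric Bayes–Nash equilibrium bidding strategy of the non-integrated bidders. Then for all $v \in [0,1]$, $$\frac{n_A}{n_A+1}\, v \le \sigma_n(v) \le v.$$
   Context: Bidders are risk neutral with quasilinear utility (value minus payment if winning, zero otherwise). *)

From HB Require Import structures.
From mathcomp Require Import all_boot all_order all_algebra.
From mathcomp Require Import all_classical all_reals all_analysis.
Set Implicit Arguments. Unset Strict Implicit. Unset Printing Implicit Defensive.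
Import Order.TTheory GRing.Theory Num.Theory.
Local Open Scope classical_set_scope.
Local Open Scope ring_scope.

(* Probability that a value V ~ Uniform[0,1] lies in A:
   the Lebesgue measure of A ∩ [0,1]. *)
Definition unif_prob (R : realType) (A : set R) : R :=
  fine (@lebesgue_measure R (A `&` [set x | 0 <= x <= 1])).

(* Probability that a bid b strictly exceeds the bids of all other bidders,
   from the point of view of a non-integrated bidder, when the nA integrated
   bidders bid their values and the other n-1 non-integrated bidders use sigma
   (values i.i.d. uniform on [0,1]).  Ties have probability zero when sigma is
   strictly increasing, so the tie-breaking rule is irrelevant. *)
Definition win_prob (R : realType) (nA n : nat) (sigma : R -> R) (b : R) : R :=
  (unif_prob [set x | x < b]) ^+ nA * (unif_prob [set x | sigma x < b]) ^+ n.-1.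

Definition ni_utility (R : realType) (nA n : nat) (sigma : R -> R) (v b : R) : R :=
  (v - b) * win_prob nA n sigma b.

Definition strictly_increasing_on01 (R : realType) (sigma : R -> R) : Prop :=
  forall x y : R, 0 <= x -> x < y -> y <= 1 -> sigma x < sigma y.

Definition ni_symmetric_BNE (R : realType) (nA n : nat) (sigma : R -> R) : Prop :=
  (forall v : R, 0 <= v <= 1 -> 0 <= sigma v) /\
  (forall v b : R, 0 <= v <= 1 -> 0 <= b ->
     ni_utility nA n sigma v b <= ni_utility nA n sigma v (sigma v)).

From HB Require Import structures.
From mathcomp Require Import all_boot all_order all_algebra.
From mathcomp Require Import all_classical all_reals all_analysis.
From mathcomp Require Import ring.
Import Order.TTheory GRing.Theory Num.Theory.
Set Implicit Arguments. Unset Strict Implicit.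
Local Open Scope ring_scope.
Local Open Scope classical_set_scope.

(* A non-integrated bidder never bids above its value: bidding 0 secures zero
   utility, whereas a bid above the value wins with positive probability at a
   loss.  For the lower bound, suppose sigma v < b := nA v / (nA + 1) and
   deviate to b.  The deviation can only raise the probability of beating the
   other non-integrated bidders, and against the truthful integrated bidders
   the payoff is (v - x) x^nA, which increases strictly on [0, b] since b is
   its maximiser; so the deviation is profitable, contradicting equilibrium. *)

Lemma expr_tangent_lt (R : realDomainType) (m : nat) (s b : R) :
  (0 < m)%N -> 0 <= s -> s < b ->
  m.+1%:R * s ^+ m * (b - s) < b ^+ m.+1 - s ^+ m.+1.
Proof.
move=> + s_ge0 sb; rewrite -subr_gt0; elim: m => [//|[_ _|m IH _]].
  have -> : b ^+ 2 - s ^+ 2 - 2%:R * s ^+ 1 * (b - s) = (b - s) ^+ 2 by ring.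
  by rewrite exprn_gt0 // subr_gt0.
have b_gt0 : 0 < b by apply: le_lt_trans sb.
(* The gap d m between the power and its tangent satisfies
   d (m + 1) = b * d m + (m + 1) s^m (b - s)^2. *)
have -> : b ^+ m.+3 - s ^+ m.+3 - m.+3%:R * s ^+ m.+2 * (b - s) =
    b * (b ^+ m.+2 - s ^+ m.+2 - m.+2%:R * s ^+ m.+1 * (b - s))
    + m.+2%:R * s ^+ m.+1 * (b - s) ^+ 2.
  by rewrite !exprS; ring.
apply: lt_le_trans (mulr_gt0 b_gt0 (IH isT)) _.
by rewrite lerDl mulr_ge0 ?sqr_ge0 // mulr_ge0 ?exprn_ge0.
Qed.

Lemma bid_margin_lt (R : realFieldType) (m : nat) (v s b : R) :
  0 <= s -> s < b -> m.+1%:R * b <= m%:R * v ->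
  (v - s) * s ^+ m < (v - b) * b ^+ m.
Proof.
move=> s_ge0 sb; have b_gt0 : 0 < b by apply: le_lt_trans sb.
case: m => [|m bv]; first by rewrite mul0r mul1r leNgt b_gt0.
have m_gt0 : 0 < m.+1%:R :> R by rewrite ltr0n.
have pow_le : 0 <= b ^+ m.+1 - s ^+ m.+1.
  by rewrite subr_ge0 lerXn2r ?nnegrE // ltW // (le_lt_trans s_ge0).
have grow : m.+2%:R * b * (b ^+ m.+1 - s ^+ m.+1)
            <= m.+1%:R * v * (b ^+ m.+1 - s ^+ m.+1) by exact: ler_wpM2r.
rewrite -(ltr_pM2l m_gt0) -subr_gt0.
have -> : m.+1%:R * ((v - b) * b ^+ m.+1) - m.+1%:R * ((v - s) * s ^+ m.+1) =
    m.+1%:R * v * (b ^+ m.+1 - s ^+ m.+1) - m.+1%:R * (b ^+ m.+2 - s ^+ m.+2).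
  by rewrite !exprS; ring.
apply: lt_le_trans (lerB grow (lexx _)).
have -> : m.+2%:R * b * (b ^+ m.+1 - s ^+ m.+1) - m.+1%:R * (b ^+ m.+2 - s ^+ m.+2) =
    b ^+ m.+2 - s ^+ m.+2 - m.+2%:R * s ^+ m.+1 * (b - s).
  by rewrite !exprS; ring.
by rewrite subr_gt0 expr_tangent_lt.
Qed.

Section UniformProbability.
Variable R : realType.

Lemma lebesgue_measure_le (A B : set R) : A `<=` B ->
  (lebesgue_measure A <= lebesgue_measure B)%E.
Proof.
move=> AB; rewrite /lebesgue_measure /lebesgue_stieltjes_measure.
by rewrite /measure_extension; apply: le_mu_ext.
Qed.

Lemma unif_prob_fin_num (A : set R) :
  lebesgue_measure (A `&` [set x : R | 0 <= x <= 1]) \is a fin_num.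
Proof.
rewrite ge0_fin_numE ?measure_ge0 //.
apply: le_lt_trans (lebesgue_measure_le (@subIsetr _ A _)) _.
have -> : [set x : R | 0 <= x <= 1] = [set` `[0, 1]%R].
  by apply/seteqP; split => x /=; rewrite in_itv.
by rewrite lebesgue_measure_itv /= lte_fin ltr01 ltry.
Qed.

Lemma unif_prob_ge0 (A : set R) : 0 <= unif_prob A.
Proof. exact/fine_ge0/measure_ge0. Qed.

Lemma unif_prob_le (A B : set R) :
  (forall x, 0 <= x <= 1 -> A x -> B x) -> unif_prob A <= unif_prob B.
Proof.
move=> AB; apply: fine_le; rewrite ?unif_prob_fin_num //.
by apply: lebesgue_measure_le => x [Ax x01]; split => //; apply: AB.
Qed.

Lemma unif_prob0 (A : set R) : (forall x, 0 <= x <= 1 -> ~ A x) -> unif_prob A = 0.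
Proof.
move=> A0; rewrite /unif_prob.
have -> : A `&` [set x | 0 <= x <= 1] = set0.
  by apply/seteqP; split => x // [/[swap] /A0].
by rewrite measure0.
Qed.

Lemma unif_prob_ltE (b : R) : 0 <= b <= 1 -> unif_prob [set x | x < b] = b.
Proof.
move=> /andP[b_ge0 b_le1]; rewrite /unif_prob.
have -> : [set x | x < b] `&` [set x | 0 <= x <= 1] = [set` `[0, b[%R].
  apply/seteqP; split => x /=; rewrite in_itv /=; first by case=> -> /andP[->].
  by case/andP=> -> xb; rewrite xb (le_trans (ltW xb)).
rewrite lebesgue_measure_itv /= lte_fin.
by case: ltrP => [_|]; [rewrite sube0 | move=> b_le0; apply/eqP; rewrite eq_le b_ge0].
Qed.

Lemma unif_prob_lt_gt0 (c : R) : 0 < c -> 0 < unif_prob [set x | x < c].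
Proof.
move=> c_gt0; have c1_01 : 0 <= Num.min c 1 <= 1.
  by rewrite le_min ler01 ltW //= ge_min lexx orbT.
apply: (@lt_le_trans _ _ (unif_prob [set x | x < Num.min c 1])).
  by rewrite unif_prob_ltE // lt_min c_gt0 ltr01.
by apply: unif_prob_le => x _ /= /lt_le_trans; apply; rewrite ge_min lexx.
Qed.

End UniformProbability.

Definition bid_cdf (R : realType) (sigma : R -> R) (b : R) : R :=
  unif_prob [set x | sigma x < b].

Section BidDistribution.
Variables (R : realType) (nA n : nat) (sigma : R -> R).
Hypotheses (sigma_inc : strictly_increasing_on01 sigma)
  (sigma_ge0 : forall v : R, 0 <= v <= 1 -> 0 <= sigma v).

Lemma bid_cdf_le (b c : R) : b <= c -> bid_cdf sigma b <= bid_cdf sigma c.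
Proof. by move=> bc; apply: unif_prob_le => x _ /= /lt_le_trans; apply. Qed.

Lemma bid_cdf0 : bid_cdf sigma 0 = 0.
Proof. by apply: unif_prob0 => x /sigma_ge0; rewrite /= leNgt => /negP. Qed.

Lemma value_le_bid_cdf (w : R) : 0 <= w <= 1 -> w <= bid_cdf sigma (sigma w).
Proof.
move=> w01; rewrite -{1}(unif_prob_ltE w01).
apply: unif_prob_le => x /andP[x_ge0 _] /= xw.
by apply: sigma_inc => //; case/andP: w01.
Qed.

Lemma win_probE (b : R) : 0 <= b <= 1 ->
  win_prob nA n sigma b = b ^+ nA * bid_cdf sigma b ^+ n.-1.
Proof. by move=> b01; rewrite /win_prob unif_prob_ltE. Qed.

Lemma win_prob0 : (1 < n)%N -> win_prob nA n sigma 0 = 0.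
Proof.
move=> n_gt1; rewrite /win_prob -/(bid_cdf _ _) bid_cdf0 expr0n.
by rewrite -subn1 subn_eq0 leqNgt n_gt1 mulr0.
Qed.

Lemma win_prob_bid_gt0 (w : R) : 0 < w <= 1 -> 0 < win_prob nA n sigma (sigma w).
Proof.
case/andP=> w_gt0 w_le1; have w01 : 0 <= w <= 1 by rewrite ltW.
have bid_gt0 : 0 < sigma w.
  by apply: le_lt_trans (sigma_inc (lexx 0) w_gt0 w_le1); rewrite sigma_ge0 // lexx ler01.
rewrite mulr_gt0 // exprn_gt0 ?unif_prob_lt_gt0 //.
exact: lt_le_trans w_gt0 (value_le_bid_cdf w01).
Qed.

End BidDistribution.

Section Equilibrium.
Variables (R : realType) (nA n : nat) (sigma : R -> R).
Hypotheses (n_gt1 : (1 < n)%N) (sigma_inc : strictly_increasing_on01 sigma)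
  (sigma_bne : ni_symmetric_BNE nA n sigma).

Let sigma_ge0 : forall v : R, 0 <= v <= 1 -> 0 <= sigma v.
Proof. by case: sigma_bne. Qed.

Lemma ni_utility_bid_ge0 (v : R) : 0 <= v <= 1 -> 0 <= ni_utility nA n sigma v (sigma v).
Proof.
move=> v01; have := sigma_bne.2 v 0 v01 (lexx 0).
by rewrite /ni_utility win_prob0 ?mulr0.
Qed.

Lemma bid_le_value_pos (v : R) : 0 < v <= 1 -> sigma v <= v.
Proof.
move=> v01; have v_01 : 0 <= v <= 1 by case/andP: v01 => /ltW -> ->.
have := ni_utility_bid_ge0 v_01.
by rewrite /ni_utility pmulr_lge0 ?subr_ge0 // win_prob_bid_gt0.
Qed.

Lemma bid_le_value (v : R) : 0 <= v <= 1 -> sigma v <= v.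
Proof.
case/andP=> v_ge0 v_le1; have [v_gt0|v_le0] := ltrP 0 v.
  by rewrite bid_le_value_pos ?v_gt0.
have -> : v = 0 by apply/eqP; rewrite eq_le v_le0.
(* For z > 0, z' := min z 1 gives sigma 0 < sigma z' <= z' <= z. *)
apply/ler_addgt0Pr => z z_gt0; rewrite add0r; set z' := Num.min z 1.
have z'01 : 0 < z' <= 1 by rewrite lt_min z_gt0 ltr01 ge_min lexx orbT.
have [z'_gt0 z'_le1] := andP z'01.
apply: le_trans (ltW (sigma_inc (lexx 0) z'_gt0 z'_le1)) _.
by apply: le_trans (bid_le_value_pos z'01) _; rewrite ge_min lexx.
Qed.

Lemma shaded_value_le_bid (v : R) : 0 <= v <= 1 -> nA%:R / (nA%:R + 1) * v <= sigma v.
Proof.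
move=> v01; have [v_ge0 v_le1] := andP v01.
rewrite leNgt; apply/negP => bid_lt.
set b := _ * v in bid_lt; set s := sigma v in bid_lt.
have s_ge0 : 0 <= s by exact: sigma_ge0.
have b_ge0 : 0 <= b by apply: le_trans s_ge0 (ltW bid_lt).
have b_le_v : b <= v.
  by rewrite ler_piMl // ler_pdivrMr ?mul1r ?lerDl // ltr_wpDl.
have v_gt0 : 0 < v by apply: le_lt_trans s_ge0 (lt_le_trans bid_lt b_le_v).
have s01 : 0 <= s <= 1 by rewrite s_ge0 (le_trans (bid_le_value v01)).
have b01 : 0 <= b <= 1 by rewrite b_ge0 (le_trans b_le_v).
have cdf_gt0 : 0 < bid_cdf sigma s ^+ n.-1.
  by rewrite exprn_gt0 // (lt_le_trans v_gt0) // value_le_bid_cdf.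
have cdf_le : bid_cdf sigma s ^+ n.-1 <= bid_cdf sigma b ^+ n.-1.
  by rewrite lerXn2r ?nnegrE ?unif_prob_ge0 ?bid_cdf_le ?ltW.
have margin_le : (v - b) * b ^+ nA <= (v - s) * s ^+ nA.
  have := sigma_bne.2 v b v01 b_ge0; rewrite /ni_utility !win_probE // !mulrA.
  move=> util; rewrite -(ler_pM2r cdf_gt0); apply: le_trans util.
  apply: ler_wpM2l cdf_le.
  by rewrite mulr_ge0 ?subr_ge0 ?exprn_ge0.
have shade : nA.+1%:R * b = nA%:R * v.
  by rewrite /b -natr1; field; rewrite natr1 pnatr_eq0.
by move: margin_le; rewrite leNgt bid_margin_lt ?shade.
Qed.

End Equilibrium.

Theorem mainTheorem3 (R : realType) (nA n : nat) (sigma : R -> R) :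
  (1 < n)%N ->
  strictly_increasing_on01 sigma ->
  ni_symmetric_BNE nA n sigma ->
  forall v : R, 0 <= v <= 1 ->
    (nA%:R / (nA%:R + 1)) * v <= sigma v /\ sigma v <= v.
Proof.
move=> n_gt1 sigma_inc sigma_bne v v01.
split; first exact: shaded_value_le_bid sigma n_gt1 sigma_inc sigma_bne v v01.
exact: bid_le_value sigma n_gt1 sigma_inc sigma_bne v v01.
Qed.
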